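(* Let $L$ be a Latin array of order $n$, let $D$ be a diagonal of $L$ of weight $w$, and let $e$ be a cell of $D$. Then there is a diagonal of $L$ containing $e$, of weight at least $w$, on which each symbol appears at most twice.
   Context: A Latin array of order $n$ is an $n\times n$ matrix each of whose cells contains a symbol (from an arbitrary set of symbols), such that no symbol occurs more than once in any row or in any column. A diagonal of an $n\times n$ array is a selection of $n$ cells, one from each row and one from each column; its weight is the number of distinct symbols on it. *)

From mathcomp Require Import all_boot all_fingroup.
Set Implicit Arguments. Unset Strict Implicit. Unset Printing Implicit Defensive.

Definition latin_array (S : eqType) (n : nat) (L : 'I_n -> 'I_n -> S) : Prop :=
  (forall i j1 j2, L i j1 = L i j2 -> j1 = j2) /\
  (forall j i1 i2, L i1 j = L i2 j -> i1 = i2).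

(* A diagonal is represented by a permutation s: its cells are (i, s i). *)
Definition diag_symbols (S : eqType) (n : nat) (L : 'I_n -> 'I_n -> S)
  (s : {perm 'I_n}) : seq S := [seq L i (s i) | i <- enum 'I_n].

Definition weight (S : eqType) (n : nat) (L : 'I_n -> 'I_n -> S)
  (s : {perm 'I_n}) : nat := size (undup (diag_symbols L s)).

Definition on_diag (n : nat) (s : {perm 'I_n}) (i j : 'I_n) : bool := s i == j.

(* Grow the new diagonal row by row.  For a permutation s and sets of rows
   P \subset R containing r, the invariant [partial_diag s R P] asks that
   s r = c, that the cells (i, s i) with i in P carry distinct symbols, and
   that no symbol occurs more than twice on the cells (i, s i) with i in R.
   It holds for s = D, with P one row per symbol of D, and P never changes.
   A row u outside R whose symbol already occurs twice in R is added by
   exchanging the columns of u and of a row r' <> r of R such that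
   L r' (s u) does not occur in R and L u (s r') occurs at most once; r' then
   gets a brand new symbol, so P keeps distinct symbols.  Such an r' exists
   by counting: otherwise the rows of R other than r inject into the cells of
   R not carrying the symbol L u (s u), of which there are at most |R| - 2. *)

From mathcomp Require Import all_boot all_fingroup.
Set Implicit Arguments. Unset Strict Implicit. Unset Printing Implicit Defensive.

Lemma leq_card_rel (I T : finType) (A : {set I}) (B : {set T}) (rho : I -> T -> bool) :
  {in A, forall a, exists2 b, b \in B & rho a b} ->
  (forall a1 a2 b, a1 \in A -> a2 \in A -> rho a1 b -> rho a2 b -> a1 = a2) ->
  #|A| <= #|B|.
Proof.
move=> rhoAB rho_inj.
have [-> | [a0 a0A]] := set_0Vmem A; first by rewrite cards0.
have [b0 _ _] := rhoAB a0 a0A.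
pose g a := odflt b0 [pick b in B | rho a b].
have gP a : a \in A -> (g a \in B) && rho a (g a).
  move=> aA; rewrite /g; case: pickP => [b /andP[-> ->] // | none].
  by have [b bB rab] := rhoAB a aA; move: (none b); rewrite bB rab.
have g_inj : {in A &, injective g}.
  move=> a1 a2 a1A a2A eq_g.
  move: (gP a1 a1A) (gP a2 a2A) => /andP[_ r1] /andP[_ r2].
  by apply: (rho_inj a1 a2 (g a1)) => //; rewrite eq_g.
rewrite -(card_in_imset g_inj); apply: subset_leq_card.
by apply/subsetP => _ /imsetP[a aA ->]; case/andP: (gP a aA).
Qed.

Section Occurrences.
Variables (T : finType) (S : eqType).
Implicit Types (f g : T -> S) (A B : {set T}).

Definition occ f B (x : S) : nat := #|[set b in B | f b == x]|.

Definition reps f B : {set T} :=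
  [set b in B | [pick b' in B | f b' == f b] == Some b].

Lemma occ_gt0 f B b : b \in B -> 0 < occ f B (f b).
Proof. by move=> bB; apply/card_gt0P; exists b; rewrite inE bB /=. Qed.

Lemma occS f A B x : A \subset B -> occ f A x <= occ f B x.
Proof.
move=> AB; apply/subset_leq_card/subsetP => b; rewrite !inE => /andP[bA ->].
by rewrite (subsetP AB).
Qed.

Lemma leq_occU1 f B u x : occ f (u |: B) x <= (f u == x) + occ f B x.
Proof.
rewrite /occ !setIdE setIUl; apply: leq_trans (leq_card_setU _ _) _.
rewrite leq_add2r; case: (eqVneq (f u) x) => [_ | fux].
  by rewrite (leq_trans (subset_leq_card (subsetIl _ _))) ?cards1.
rewrite leqn0 cards_eq0; apply/eqP/setP => b; rewrite !inE.
by case: eqP => // ->; rewrite (negbTE fux).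
Qed.

Lemma eq_in_occ f g B : {in B, f =1 g} -> occ f B =1 occ g B.
Proof.
by move=> fg x; apply: eq_card => b; rewrite !inE; case bB: (b \in B); rewrite //= fg.
Qed.

Lemma occ_setT f x : occ f [set: T] x = count_mem x [seq f i | i <- enum T].
Proof.
rewrite count_map -size_filter /occ cardE; congr size.
by rewrite [in LHS]/enum_mem -enumT; apply: eq_filter => i; rewrite !inE.
Qed.

Lemma reps_sub f B : reps f B \subset B.
Proof. by apply/subsetP => b; rewrite inE => /andP[]. Qed.

Lemma reps_inj f B : {in reps f B &, injective f}.
Proof.
move=> b1 b2; rewrite !inE => /andP[_ /eqP pick1] /andP[_ /eqP pick2] f12.
by move: pick1; rewrite f12 pick2 => -[].
Qed.

Lemma reps_exists f B b : b \in B -> exists2 b', b' \in reps f B & f b' = f b.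
Proof.
move=> bB; have := erefl [pick b' in B | f b' == f b].
case: {2}_ / pickP => [b' /andP[b'B /eqP fb'] pick_b' | none _].
  by exists b'; rewrite // inE b'B fb'; apply/eqP.
by move: (none b); rewrite /= bB eqxx.
Qed.

Lemma occ_reps_le1 f B x : occ f (reps f B) x <= 1.
Proof.
apply/card_le1_eqP => b1 b2; rewrite inE => /andP[b1R /eqP f1].
by rewrite inE => /andP[b2R /eqP f2]; apply: (reps_inj b2R b1R); rewrite f1 f2.
Qed.

Lemma leq_card_occ (I : finType) f B (A1 A2 : {set I}) (g1 g2 : I -> S) :
  {in A1 &, injective g1} -> {in A2 &, injective g2} ->
  {in A1, forall a, 0 < occ f B (g1 a)} -> {in A2, forall a, 1 < occ f B (g2 a)} ->
  #|A1| + #|A2| <= #|B|.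
Proof.
move=> g1_inj g2_inj occ1 occ2.
rewrite -(cardsID (reps f B) B) (setIidPr (reps_sub f B)); apply: leq_add.
  apply: (@leq_card_rel _ _ _ _ (fun a b => f b == g1 a)).
    move=> a /occ1/card_gt0P[b]; rewrite inE => /andP[bB /eqP fb].
    by have [b' b'R fb'] := reps_exists f bB; exists b'; rewrite // fb' fb.
  by move=> a1 a2 b a1A a2A /eqP e1 /eqP e2; apply: g1_inj; rewrite // -e1 -e2.
apply: (@leq_card_rel _ _ _ _ (fun a b => f b == g2 a)).
  move=> a /occ2/card_gt1P[b1 [b2 []]]; rewrite !inE.
  move=> /andP[b1B /eqP f1] /andP[b2B /eqP f2] b12.
  have [b1R | b1R] := boolP (b1 \in reps f B); last by exists b1; rewrite ?in_setD ?b1R ?b1B ?f1.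
  exists b2; rewrite ?f2 // in_setD b2B andbT; apply: contra b12 => b2R.
  by apply/eqP/(reps_inj b1R b2R); rewrite f1 f2.
by move=> a1 a2 b a1A a2A /eqP e1 /eqP e2; apply: g2_inj; rewrite // -e1 -e2.
Qed.

Lemma leq_card_size_undup f (P : {set T}) :
  {in P &, injective f} -> #|P| <= size (undup [seq f i | i <- enum T]).
Proof.
move=> f_inj; rewrite cardE -(size_map f); apply: uniq_leq_size.
  by rewrite map_inj_in_uniq ?enum_uniq // => a b; rewrite !mem_enum; apply: f_inj.
by move=> _ /mapP[i _ ->]; rewrite mem_undup map_f ?mem_enum.
Qed.

Lemma size_undup_le_reps f : size (undup [seq f i | i <- enum T]) <= #|reps f [set: T]|.
Proof.
rewrite cardE -(size_map f); apply: uniq_leq_size; first exact: undup_uniq.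
move=> y; rewrite mem_undup => /mapP[i _ ->].
by have [j jR <-] := reps_exists f (in_setT i); rewrite map_f ?mem_enum.
Qed.

End Occurrences.

Section LatinArray.
Variables (S : eqType) (n : nat) (L : 'I_n -> 'I_n -> S).
Hypothesis HL : latin_array L.
Implicit Types (s D : {perm 'I_n}) (R P : {set 'I_n}).

Definition diag_at s (i : 'I_n) : S := L i (s i).

Lemma latin_row_inj i : injective (L i).
Proof. by case: HL => row_inj _ j1 j2; apply: row_inj. Qed.

Lemma latin_col_inj j : injective (L^~ j).
Proof. by case: HL => _ col_inj i1 i2; apply: col_inj. Qed.

Section Growth.
Variables r c : 'I_n.

Definition partial_diag s R P : Prop :=
  [/\ r \in R, s r = c, P \subset R, {in P &, injective (diag_at s)}
    & forall x, occ (diag_at s) R x <= 2].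

Lemma partial_diag_init D : D r = c ->
  partial_diag D (r |: reps (diag_at D) [set: 'I_n]) (reps (diag_at D) [set: 'I_n]).
Proof.
move=> Dr; split => //.
- exact: setU11.
- exact: subsetU1.
- exact: reps_inj.
move=> x; apply: leq_trans (leq_occU1 _ _ _ _) _.
exact: leq_add (leq_b1 _) (occ_reps_le1 _ _ _).
Qed.

Lemma partial_diag_add s R P u : partial_diag s R P ->
  occ (diag_at s) R (diag_at s u) <= 1 -> partial_diag s (u |: R) P.
Proof.
case=> rR sr PR P_inj occ_le2 occ_u; split => //.
- by rewrite setU1r.
- exact: subset_trans PR (subsetU1 _ _).
move=> x; apply: leq_trans (leq_occU1 _ _ _ _) _.
by case: eqP => [<- | _]; [exact: occ_u | exact: occ_le2].
Qed.

Lemma exists_swap_row s R u : r \in R -> u \notin R ->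
  1 < occ (diag_at s) R (diag_at s u) ->
  exists r', [/\ r' \in R, r' != r, occ (diag_at s) R (L r' (s u)) = 0
                & occ (diag_at s) R (L u (s r')) <= 1].
Proof.
move=> rR uR occ_u.
have [r' /and4P[r'R r'r /eqP occ_r'u occ_ur'] | none] := pickP [pred r' in R | [&& r' != r,
    occ (diag_at s) R (L r' (s u)) == 0 & occ (diag_at s) R (L u (s r')) <= 1]].
  by exists r'.
exfalso.
have neq_u a : a \in R -> a != u by move=> aR; apply: contraNneq uR => <-.
pose X := [set i | diag_at s i == diag_at s u].
pose Y := [set a | 0 < occ (diag_at s) R (L a (s u))].
have occ_RX y : y != diag_at s u -> occ (diag_at s) (R :\: X) y = occ (diag_at s) R y.
  move=> yu; apply: eq_card => i; rewrite !inE.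
  by case: (eqVneq (diag_at s i) y) => [-> | _]; rewrite ?yu ?eqxx ?andbF.
have card_le : #|(R :\ r) :&: Y| + #|(R :\ r) :\: Y| <= #|R :\: X|.
  apply: (leq_card_occ (f := diag_at s) (g1 := fun a => L a (s u)) (g2 := fun a => L u (s a))).
  - by move=> a1 a2 _ _; apply: latin_col_inj.
  - by move=> a1 a2 _ _ /latin_row_inj /perm_inj.
  - move=> a /setIP[/setD1P[_ aR]]; rewrite inE => occ_a.
    by rewrite occ_RX //; apply: contraNneq (neq_u a aR) => /latin_col_inj/eqP.
  - move=> a /setDP[/setD1P[ar aR]]; rewrite inE -leqNgt leqn0 => /eqP occ_a.
    rewrite occ_RX; last by apply: contraNneq (neq_u a aR) => /latin_row_inj/perm_inj/eqP.
    by move: (none a); rewrite /= aR ar occ_a eqxx /= ltnNge => ->.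
move: occ_u; rewrite /occ setIdE -/X => occ_u.
have := leq_add occ_u card_le.
by rewrite cardsID cardsID (cardsD1 r R) rR leq_add2r.
Qed.

Lemma partial_diag_swap s R P u r' : partial_diag s R P -> u \notin R ->
  r' \in R -> r' != r -> occ (diag_at s) R (L r' (s u)) = 0 ->
  occ (diag_at s) R (L u (s r')) <= 1 -> partial_diag (tperm u r' * s) (u |: R) P.
Proof.
case=> rR sr PR P_inj occ_le2 uR r'R r'r occ_r'u occ_ur'.
set s' := (tperm u r' * s)%g.
have neq_u j : j \in R -> j != u by move=> jR; apply: contraNneq uR => <-.
have diag_s'E : {in R :\ r', diag_at s' =1 diag_at s}.
  move=> j /setD1P[jr' jR].
  by rewrite /diag_at permM tpermD // eq_sym ?neq_u.
have diag_s'u : diag_at s' u = L u (s r') by rewrite /diag_at permM tpermL.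
have diag_s'r' : diag_at s' r' = L r' (s u) by rewrite /diag_at permM tpermR.
have fresh j : j \in R -> diag_at s j != L r' (s u).
  by move=> jR; apply/eqP => e; move: (occ_gt0 (diag_at s) jR); rewrite e occ_r'u.
split.
- exact: setU1r.
- by rewrite permM tpermD // eq_sym ?neq_u.
- exact: subset_trans PR (subsetU1 _ _).
- move=> i1 i2 i1P i2P; have i1R := subsetP PR _ i1P; have i2R := subsetP PR _ i2P.
  case: (eqVneq i1 r') => [-> | i1r']; case: (eqVneq i2 r') => [-> | i2r'] //.
  + by rewrite diag_s'r' diag_s'E ?inE ?i2r' // => e; move: (fresh _ i2R); rewrite -e eqxx.
  + by rewrite diag_s'r' diag_s'E ?inE ?i1r' // => e; move: (fresh _ i1R); rewrite e eqxx.
  + by rewrite !diag_s'E ?inE ?i1r' ?i2r' //; apply: P_inj.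
move=> x; apply: leq_trans (leq_occU1 _ _ _ _) _; rewrite diag_s'u.
rewrite -{1}(setD1K r'R); apply: leq_trans (leq_add (leqnn _) (leq_occU1 _ _ _ _)) _.
rewrite diag_s'r' (eq_in_occ diag_s'E).
have occ_D1 y := occS (diag_at s) y (subD1set R r').
case: (eqVneq (L r' (s u)) x) => [<- | _].
  by move: (occ_D1 (L r' (s u))); rewrite occ_r'u leqn0 => /eqP ->; case: (_ == _).
case: (eqVneq (L u (s r')) x) => [<- | _]; last exact: leq_trans (occ_D1 x) (occ_le2 x).
exact: leq_trans (occ_D1 _) occ_ur'.
Qed.

Lemma partial_diag_step s R P u : partial_diag s R P -> u \notin R ->
  exists s', partial_diag s' (u |: R) P.
Proof.
move=> hs uR; have [rR _ _ _ _] := hs.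
have [occ_u | occ_u] := leqP (occ (diag_at s) R (diag_at s u)) 1.
  by exists s; apply: partial_diag_add.
have [r' [r'R r'r occ_r'u occ_ur']] := exists_swap_row rR uR occ_u.
by exists (tperm u r' * s)%g; apply: partial_diag_swap.
Qed.

Lemma partial_diag_complete s R P : partial_diag s R P ->
  exists s', partial_diag s' [set: 'I_n] P.
Proof.
have [k] := ubnP #|~: R|; elim: k s R => // k IH s R; rewrite ltnS => hk hs.
have [R_full | [u]] := set_0Vmem (~: R).
  by exists s; move: hs; rewrite -(setCK R) R_full setC0.
rewrite inE => uR; have [s' hs'] := partial_diag_step hs uR.
apply: IH hs'; apply: leq_trans hk.
by rewrite setCU (cardsD1 u (~: R)) inE uR setIC -setDE.
Qed.

End Growth.
End LatinArray.

Theorem lemma2p3 (S : eqType) (n : nat) (L : 'I_n -> 'I_n -> S)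
  (HL : latin_array L) (D : {perm 'I_n}) (w : nat) (Hw : weight L D = w)
  (r c : 'I_n) (He : on_diag D r c) :
  exists D' : {perm 'I_n},
    [/\ on_diag D' r c, w <= weight L D' &
        forall x : S, count_mem x (diag_symbols L D') <= 2].
Proof.
have [s [_ sr _ P_inj occ_le2]] := partial_diag_complete HL (partial_diag_init L (eqP He)).
exists s; split.
- exact/eqP.
- rewrite -Hw; apply: leq_trans (size_undup_le_reps _) (leq_card_size_undup P_inj).
- by move=> x; have := occ_le2 x; rewrite occ_setT.
Qed.
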